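(* Let $\tau$ be a trace and $S\in\mathsf{sched}(\tau)$. Let $S'$ be an interleaving with $S'\notin\mathsf{sched}(\tau)$. Then $S\not\approx S'$.
   Context: Setting: a generic asynchronous message-passing language. There are pairwise disjoint domains of process identifiers (pids), message values, and message tags, a domain of constraints, and a decidable function $\mathsf{match}$ with $\mathsf{match}(v,cs)\in\{\mathit{true},\mathit{false}\}$. An event has the form $p\!:\!a$ where $p$ is a pid and $a$ is one of the actions $\mathsf{spawn}(p')$, $\mathsf{send}(\ell,v,p')$ (message with tag $\ell$, value $v$, target $p'$), $\mathsf{rec}(\ell,cs)$ (reception of message with tag $\ell$ by a receive with constraint $cs$). For a finite sequence of events $S=(e_1,\dots,e_n)$, $e_i\prec_S e_j$ means $i<j$, and $\mathsf{actions}(p,S)$ is the sequence of actions of the events of pid $p$ in $S$, in order. A sequence $S=(p_1\!:\!a_1,\dots,p_n\!:\!a_n)$ is an interleaving with initial pid $p_1$ if: (1) each event $p_j\!:\!a_j$ is either preceded in $S$ by an event $p_i\!:\!\mathsf{spawn}(p_j)$ with $p_i\neq p_j$, or $p_j=p_1$; (2) each event $p_j\!:\!\mathsf{rec}(\ell,cs)$ is preceded in $S$ by an event $p_i\!:\!\mathsf{send}(\ell,v,p_j)$ with $\mathsf{match}(v,cs)=\mathit{true}$; (3) for each pair of events $p_i\!:\!\mathsf{send}(\ell,v,p_j)$, $p_j\!:\!\mathsf{rec}(\ell,cs)$ in $S$ and every $p_i\!:\!\mathsf{send}(\ell',v',p_j)\in S$ preceding $p_i\!:\!\mathsf{send}(\ell,v,p_j)$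 in $S$, either $\mathsf{match}(v',cs)=\mathit{false}$ or some event $p_j\!:\!\mathsf{rec}(\ell',cs')\in S$ precedes $p_j\!:\!\mathsf{rec}(\ell,cs)$ in $S$; (4) each pid appears as argument of $\mathsf{spawn}$ in at most one event and each tag appears as argument of $\mathsf{send}$ in at most one event. Happened-before: for an interleaving $S=(e_1,\dots,e_n)$ with $e_i=p_i\!:\!a_i$, $e_j=p_j\!:\!a_j$, $i<j$, we have $e_i\leadsto_S e_j$ if $p_i=p_j$, or $a_i=\mathsf{spawn}(p_j)$, or $a_i=\mathsf{send}(\ell,v,p_j)$ and $a_j=\mathsf{rec}(\ell,cs)$; and $\leadsto_S$ is closed under transitivity. Two events are independent if neither happened before the other. Two interleavings $S_1,S_2$ with the same initial pid are causally equivalent, $S_1\approx S_2$, if $S_2$ can be obtained from $S_1$ by a finite number of swaps of consecutive independent events. For an interleaving $S$ with pids $p_1,\dots,p_n$, $\mathit{tr}(S)=[p_1\mapsto\mathsf{actions}(p_1,S);\dots;p_n\mapsto\mathsf{actions}(p_n,S)]$. A trace with initial pid $p_0$ is a mapping $\tau$ from pids to sequences of actions such that $\tau=\mathit{tr}(S)$ for some interleaving $S$ with initial pid $p_0$. For a trace $\tau$ with initial pid $p_0$, $\mathsf{sched}(\tau)$ is the set of all interleavings $S$ with initial pid $p_0$ such that $\mathit{tr}(S)=\tau$. *)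

From mathcomp Require Import all_boot.
From Stdlib Require Import Relations.
Set Implicit Arguments. Unset Strict Implicit. Unset Printing Implicit Defensive.

Section Interleavings.
Variables (Pid Val Tag Cs : eqType) (match_ : Val -> Cs -> bool).

Inductive action :=
| Spawn of Pid
| Send of Tag & Val & Pid
| Rec of Tag & Cs.

Definition event : Type := (Pid * action)%type.

(* i-th event of S (0-based), if any *)
Definition ev (S : seq event) (i : nat) : option event := onth S i.

Definition actions (p : Pid) (S : seq event) : seq action :=
  [seq e.2 | e <- S & e.1 == p].

Definition interleaving (p0 : Pid) (S : seq event) : Prop :=
  (forall e, ev S 0 = Some e -> e.1 = p0) /\
  (forall j p a, ev S j = Some (p, a) ->
     p = p0 \/ exists i q, i < j /\ ev S i = Some (q, Spawn p) /\ q <> p) /\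
  (forall j p l cs, ev S j = Some (p, Rec l cs) ->
     exists i q v, i < j /\ ev S i = Some (q, Send l v p) /\ match_ v cs = true) /\
  (forall i j pi pj l v cs,
     ev S i = Some (pi, Send l v pj) -> ev S j = Some (pj, Rec l cs) ->
     forall k l' v', k < i -> ev S k = Some (pi, Send l' v' pj) ->
       match_ v' cs = false \/
       exists m cs', m < j /\ ev S m = Some (pj, Rec l' cs')) /\
  (forall i j q q' p, ev S i = Some (q, Spawn p) -> ev S j = Some (q', Spawn p) -> i = j) /\
  (forall i j q q' l v v' p p',
     ev S i = Some (q, Send l v p) -> ev S j = Some (q', Send l v' p') -> i = j).

Definition hb1 (S : seq event) (i j : nat) : Prop :=
  exists pi ai pj aj, i < j /\ ev S i = Some (pi, ai) /\ ev S j = Some (pj, aj) /\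
    (pi = pj \/ ai = Spawn pj \/
     exists l v cs, ai = Send l v pj /\ aj = Rec l cs).

Definition hb (S : seq event) : nat -> nat -> Prop := clos_trans nat (hb1 S).

Definition independent (S : seq event) (i j : nat) : Prop :=
  ~ hb S i j /\ ~ hb S j i.

Definition swap_step (S1 S2 : seq event) : Prop :=
  exists A e1 e2 B, S1 = A ++ e1 :: e2 :: B /\ S2 = A ++ e2 :: e1 :: B /\
    independent S1 (size A) (size A).+1.

Definition causally_equiv (S1 S2 : seq event) : Prop :=
  exists p0, interleaving p0 S1 /\ interleaving p0 S2 /\
    clos_refl_trans (seq event) swap_step S1 S2.

(* traces are represented as total maps Pid -> seq action; pids not
   occurring in S are mapped to the empty sequence *)
Definition tr (S : seq event) : Pid -> seq action := fun p => actions p S.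

Definition is_trace (p0 : Pid) (tau : Pid -> seq action) : Prop :=
  exists S, interleaving p0 S /\ forall p, tr S p = tau p.

Definition in_sched (p0 : Pid) (tau : Pid -> seq action) (S : seq event) : Prop :=
  interleaving p0 S /\ forall p, tr S p = tau p.

End Interleavings.

From mathcomp Require Import all_boot.
From Stdlib Require Import Relations.
Set Implicit Arguments.

(** Swapping two consecutive independent events cannot exchange two events of
    the same process, since those are ordered by happened-before; hence every
    swap, and so every causally equivalent interleaving, has the same trace.
    Swaps also preserve length, and a nonempty interleaving determines its
    initial pid (that of its first event), so an interleaving causally
    equivalent to [S] lies in [sched(tr S)]. *)

Lemma clos_refl_trans_inv (T U : Type) (R : relation T) (f : T -> U) :
  (forall x y, R x y -> f x = f y) ->
  forall x y, clos_refl_trans T R x y -> f x = f y.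
Proof. by move=> Rf x y; elim=> [u v /Rf | u | u v w _ -> _ ->]. Qed.

Section Swaps.
Variables (Pid Val Tag Cs : eqType) (match_ : Val -> Cs -> bool).
Implicit Types (S : seq (event Pid Val Tag Cs)) (e : event Pid Val Tag Cs).

Lemma independent_consecutive_pid_neq A e1 e2 B :
  independent (A ++ e1 :: e2 :: B) (size A) (size A).+1 -> e1.1 <> e2.1.
Proof.
case=> not_hb _ same_pid; apply: not_hb; apply: t_step.
exists e1.1, e1.2, e2.1, e2.2.
rewrite /ev !onth_cat ltnn subnn (ltnNge _.+1) leqnSn subSnn.
by case: e1 e2 same_pid => [p1 a1] [p2 a2] /= ->; do 3!split=> //; left.
Qed.

Lemma swap_step_size S1 S2 : swap_step S1 S2 -> size S1 = size S2.
Proof. by case=> A [e1] [e2] [B] [-> [-> _]]; rewrite !size_cat. Qed.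

Lemma swap_step_tr p S1 S2 : swap_step S1 S2 -> tr S1 p = tr S2 p.
Proof.
case=> A [e1] [e2] [B] [-> [-> /independent_consecutive_pid_neq pid12]].
rewrite /tr /actions !filter_cat !map_cat /=.
case: (eqVneq e1.1 p) => [<-|_]; case: (eqVneq e2.1 e1.1) => //= pid21.
by case: (pid12 (esym pid21)).
Qed.

Lemma swaps_size S1 S2 :
  clos_refl_trans _ (@swap_step Pid Val Tag Cs) S1 S2 -> size S1 = size S2.
Proof. exact: (clos_refl_trans_inv (@size _) swap_step_size). Qed.

Lemma swaps_tr p S1 S2 :
  clos_refl_trans _ (@swap_step Pid Val Tag Cs) S1 S2 -> tr S1 p = tr S2 p.
Proof. exact: (clos_refl_trans_inv (fun S => tr S p) (swap_step_tr p)). Qed.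

Lemma interleaving_nil (p0 : Pid) :
  interleaving match_ p0 ([::] : seq (event Pid Val Tag Cs)).
Proof.
have ev_nil i : ev ([::] : seq (event Pid Val Tag Cs)) i = None by case: i.
by do !split=> *; match goal with H : ev _ _ = Some _ |- _ => rewrite ev_nil in H end.
Qed.

Lemma interleaving_initial_pid_uniq p p' e S :
  interleaving match_ p (e :: S) -> interleaving match_ p' (e :: S) -> p = p'.
Proof. by move=> [init_p _] [init_p' _]; rewrite -(init_p e) // (init_p' e). Qed.

End Swaps.

Theorem theorem2 (Pid Val Tag Cs : eqType) (match_ : Val -> Cs -> bool)
  (p0 : Pid) (tau : Pid -> seq (action Pid Val Tag Cs)) :
  is_trace match_ p0 tau ->
  forall (S S' : seq (event Pid Val Tag Cs)) (q0 : Pid),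
    in_sched match_ p0 tau S ->
    interleaving match_ q0 S' ->
    ~ in_sched match_ p0 tau S' ->
    ~ causally_equiv match_ S S'.
Proof.
move=> _ S S' _ [HS trS] _ not_sched [p1 [HS1 [HS'1 swaps]]].
apply: not_sched; split; last first.
  by move=> p; rewrite -trS (swaps_tr p swaps).
move: (swaps_size swaps) => {swaps trS}.
case: S' HS'1 => [_ _|e' S' HS'1]; first exact: interleaving_nil.
by case: S HS HS1 => // e S HS HS1 _; rewrite (interleaving_initial_pid_uniq HS HS1).
Qed.
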